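(* Let $n\ge4$ and $\sigma=(\sigma_1,\dots,\sigma_{n-2})\in\Sigma_n$. Let $\mathbf A\in\mathcal G_n$ and let $x,y\in\mathcal G_n(\mathbf A,\mathbf C_n)$ with $x\ne y$. Then the following are equivalent: (1) $x^{-1}(\top)=y^{-1}(\top)$; (2) $\omega\circ x=\omega\circ y$; (3) there is a finite sequence $z_0=x,z_1,\dots,z_N=y$ of elements of $\mathcal G_n(\mathbf A,\mathbf C_n)$ such that for each $0\le j<N$ there is some $i_j\in\{1,\dots,n-3\}$ with $z_{j+1}=\sigma_{i_j}\circ z_j$ or $z_j=\sigma_{i_j}\circ z_{j+1}$.
   Context: $\mathbf C_n$ is the Heyting algebra whose universe is the chain $\{0<1<\dots<n-1\}$, with lattice operations min and max, $\bot=0$, $\top=n-1$, and $a\to b=\top$ if $a\le b$, $a\to b=b$ if $b<a$. $\mathcal G_n$ is the class of algebras isomorphic to subalgebras of direct powers of $\mathbf C_n$; $\mathcal G_n(\mathbf A,\mathbf C_n)$ is the set of Heyting homomorphisms $\mathbf A\to\mathbf C_n$; $\operatorname{ran}$ denotes image. $\mathbf 2$ is the two-element bounded lattice and $\omega\colon\mathbf C_n\to\{0,1\}$ is the bounded-lattice homomorphism with $\omega(\top)=1$, $\omega(k)=0$ for $k<\top$. For $n\ge4$: for $1\le i\le n-2$, $h_i$ is the endomorphism of $\mathbf C_n$ with $h_i(k)=k+1$ if $i\le k<n-1$ and $h_i(k)=k$ otherwise (so $\operatorname{ran}h_i=C_n\setminus\{i\}$). For $1\le i\le n-3$, $g_i$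 is the partial map with domain $C_n\setminus\{i\}$ given by $g_i(i+1)=i$ and $g_i(k)=k$ for $k\notin\{i,i+1\}$, and $f_i\colon C_n\setminus\{i+1\}\to C_n\setminus\{i\}$ is its inverse; these are partial endomorphisms (homomorphisms from a subalgebra of $\mathbf C_n$ into $\mathbf C_n$). $\Sigma_n=\{f_1,g_1\}\times\dots\times\{f_{n-3},g_{n-3}\}\times\{h_1,\dots,h_{n-2}\}$, whose elements are written $\sigma=(\sigma_1,\dots,\sigma_{n-2})$. For a homomorphism $z$ into $\mathbf C_n$ and a partial map $p$ on $C_n$, $p\circ z$ is defined exactly when $\operatorname{ran}z\subseteq\operatorname{dom}p$. *)

From mathcomp Require Import all_boot.
Unset Printing Implicit Defensive.

Record HSig := {
  carrier :> Type;
  hmeet : carrier -> carrier -> carrier;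
  hjoin : carrier -> carrier -> carrier;
  himp  : carrier -> carrier -> carrier;
  hbot  : carrier;
  htop  : carrier }.

(* The chain C_n has universe 'I_n = {0,...,n-1}; its operations, on values:
   min, max, 0, n-1, and a -> b = n-1 if a <= b, b otherwise.
   [respects n A v] says v : A -> nat (the values of a map A -> C_n) preserves
   all Heyting operations. *)
Definition respects (n : nat) (A : HSig) (v : A -> nat) : Prop :=
  (forall a b, v (hmeet A a b) = minn (v a) (v b)) /\
  (forall a b, v (hjoin A a b) = maxn (v a) (v b)) /\
  (forall a b, v (himp A a b) = if v a <= v b then n.-1 else v b) /\
  v (hbot A) = 0 /\ v (htop A) = n.-1.

Definition is_hom (n : nat) (A : HSig) (x : A -> 'I_n) : Prop :=
  @respects n A (fun a => nat_of_ord (x a)).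

(* A \in G_n: A is isomorphic to a subalgebra of a direct power C_n^I, i.e.
   there is an injective homomorphism A -> C_n^I (homomorphism = each
   coordinate is a homomorphism). *)
Definition in_Gn (n : nat) (A : HSig) : Prop :=
  exists (I : Type) (e : A -> I -> 'I_n),
    (forall a b, e a = e b -> a = b) /\ (forall i, is_hom n A (fun a => e a i)).

(* Partial maps on C_n (given on values). *)
Record pmap := { pdom : nat -> bool; pfun : nat -> nat }.

Definition h_map (n i : nat) : pmap :=
  {| pdom := fun _ => true;
     pfun := fun k => if (i <= k) && (k < n.-1) then k.+1 else k |}.
Definition g_map (i : nat) : pmap :=
  {| pdom := fun k => k != i;
     pfun := fun k => if k == i.+1 then i else k |}.
Definition f_map (i : nat) : pmap :=
  {| pdom := fun k => k != i.+1;
     pfun := fun k => if k == i then i.+1 else k |}.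

(* An element sigma of Sigma_n: for each 1 <= i <= n-3 a choice between f_i
   (true) and g_i (false) (values of [sig_choice] outside 1..n-3 are ignored),
   and an index 1 <= j <= n-2 selecting h_j as last component. *)
Record Sigma (n : nat) := {
  sig_choice : nat -> bool;
  sig_h : nat;
  sig_h_ok : (1 <= sig_h) && (sig_h <= n - 2) }.

Definition sigma_at (n : nat) (s : Sigma n) (i : nat) : pmap :=
  if i == n - 2 then h_map n (sig_h n s)
  else if sig_choice n s i then f_map i else g_map i.

(* [comp_eq p z w] : w = p o z, where p o z is defined (ran z \subseteq dom p). *)
Definition comp_eq (n : nat) (A : HSig) (p : pmap) (z w : A -> 'I_n) : Prop :=
  (forall a, pdom p (nat_of_ord (z a))) /\ (forall a, nat_of_ord (w a) = pfun p (nat_of_ord (z a))).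

Definition omega (n : nat) (k : 'I_n) : nat := if nat_of_ord k == n.-1 then 1 else 0.

From mathcomp Require Import all_boot zify.
From Stdlib Require Import Classical FunctionalExtensionality.

(* For (3) -> (1): every component sigma_i with 1 <= i <= n-3 is f_i or g_i,
   and both fix the top n-1 and send non-top values to non-top values, so each
   step of a chain preserves the preimage of the top.
   For (2) -> (3) we use canonical forms.  If a homomorphism z misses the value
   i, then g_i o z is again a homomorphism, linked to z by one step; iterating
   such steps closes the gaps in the range of z, so every z is linked to a
   "packed" homomorphism, whose values below the top form an initial segment
   {0, ..., m}.  Since z a <= z b iff z (a -> b) = top, the order induced on A
   by a homomorphism depends only on its top-preimage; a packed homomorphism
   sends each a to the rank of its value in that order, hence is determined by
   its top-preimage.  So x and y are linked to the same packed homomorphism,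
   and linkedness (an equivalence relation) yields the chain. *)

Set Implicit Arguments.
Unset Strict Implicit.

Lemma omega_eq n (k l : 'I_n) :
  omega n k = omega n l <-> (nat_of_ord k == n.-1) = (nat_of_ord l == n.-1).
Proof. by rewrite /omega; split; do 2 case: eqP. Qed.

Lemma sigma_at_low n (s : Sigma n) i : 1 <= i <= n - 3 ->
  sigma_at n s i = if sig_choice n s i then f_map i else g_map i.
Proof. by move=> Hi; rewrite /sigma_at ifN //; apply/eqP; lia. Qed.

Lemma sigma_low_top n (s : Sigma n) i k : 1 <= i <= n - 3 ->
  (pfun (sigma_at n s i) k == n.-1) = (k == n.-1).
Proof.
by move=> Hi; rewrite sigma_at_low //; case: sig_choice => /=;
  case: ifP => /eqP Ek; apply/eqP/eqP; lia.
Qed.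

Lemma g_map_lt n i (v : 'I_n) : pfun (g_map i) v < n.
Proof. by rewrite /=; case: eqP; have := ltn_ord v; lia. Qed.

Section Chains.
Variables (n : nat) (s : Sigma n) (A : HSig).

Definition same_top (z w : A -> 'I_n) : Prop :=
  forall a, (z a == n.-1 :> nat) = (w a == n.-1 :> nat).

Definition adjacent (z w : A -> 'I_n) : Prop :=
  exists i, (1 <= i) && (i <= n - 3) /\
    (comp_eq n A (sigma_at n s i) z w \/ comp_eq n A (sigma_at n s i) w z).

Definition chain (x y : A -> 'I_n) : Prop :=
  exists (N : nat) (z : nat -> A -> 'I_n),
    z 0 = x /\ z N = y /\ (forall j, j <= N -> is_hom n A (z j)) /\
    (forall j, j < N -> adjacent (z j) (z j.+1)).

Lemma adjacent_sym z w : adjacent z w -> adjacent w z.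
Proof. by case=> i [Hi Hzw]; exists i; split=> //; tauto. Qed.

Lemma adjacent_top z w : adjacent z w -> same_top z w.
Proof.
case=> i [Hi [[_ Hw] | [_ Hz]]] a; first by rewrite Hw sigma_low_top.
by rewrite Hz sigma_low_top.
Qed.

Inductive linked (z : A -> 'I_n) : (A -> 'I_n) -> Prop :=
| linked_refl : is_hom n A z -> linked z z
| linked_step w u : linked z w -> is_hom n A u -> adjacent w u -> linked z u.

Lemma linked_hom z w : linked z w -> is_hom n A z /\ is_hom n A w.
Proof. by elim=> [Hz | w' u _ [Hz _] Hu _]. Qed.

Lemma linked_trans z w u : linked z w -> linked w u -> linked z u.
Proof. by move=> Lzw; elim=> // w' u' _ IH Hu' Hadj; apply: linked_step Hadj. Qed.

Lemma linked_sym z w : linked z w -> linked w z.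
Proof.
elim=> [Hz | w' u Lzw IH Hu Hadj]; first exact: linked_refl.
have [_ Hw'] := linked_hom Lzw.
exact: linked_trans (linked_step (linked_refl Hu) Hw' (adjacent_sym Hadj)) IH.
Qed.

Lemma linked_top z w : linked z w -> same_top z w.
Proof. by elim=> // w' u _ IH _ Hadj a; rewrite IH (adjacent_top Hadj). Qed.

Lemma linked_chain x y : linked x y -> chain x y.
Proof.
elim=> [Hx | w u _ [N [z [z0 [zN [Hz Hadj]]]]] Hu Hwu].
  by exists 0, (fun _ => x); split; [|split; [|split]] => // j; lia.
exists N.+1, (fun j => if j <= N then z j else u); split; [|split; [|split]].
- by [].
- by rewrite ltnn.
- by move=> j Hj; case: ifP => HjN; [exact: Hz | exact: Hu].
- move=> j; rewrite ltnS; case: (ltngtP j N) => // [HjN | ->] _.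
    exact: Hadj.
  by rewrite zN.
Qed.

Lemma chain_linked x y : is_hom n A x -> chain x y -> linked x y.
Proof.
move=> Hx [N [z [z0 [zN [Hz Hadj]]]]]; rewrite -zN.
suff : forall j, j <= N -> linked x (z j) by apply.
elim=> [_ | j IH Hj]; first by rewrite z0; apply: linked_refl.
exact: linked_step (IH (ltnW Hj)) (Hz _ Hj) (Hadj _ Hj).
Qed.

Definition lower (i : nat) (z : A -> 'I_n) : A -> 'I_n :=
  fun a => Ordinal (g_map_lt i (z a)).

(* If z misses the value i < n-2, then g_i o z is again a
   homomorphism: g_i is an order embedding of C_n minus {i} fixing 0, n-1. *)
Lemma lower_hom i z : i.+2 < n -> (forall a, nat_of_ord (z a) <> i) ->
  is_hom n A z -> is_hom n A (lower i z).
Proof.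
move=> Hi Hzi [Hm [Hj [Himp [Hb Ht]]]]; rewrite /is_hom /respects /lower /=.
do !split.
- by move=> a b; rewrite Hm; repeat case: ifP; lia.
- by move=> a b; rewrite Hj; repeat case: ifP; lia.
- by move=> a b; rewrite Himp; have := Hzi a; have := Hzi b; repeat case: ifP; lia.
- by rewrite Hb.
- by rewrite Ht; case: eqP; lia.
Qed.

(* ... and it is one step away from z: if sigma_i = g_i this step is
   g_i o z itself, and if sigma_i = f_i then z = f_i o (g_i o z). *)
Lemma lower_linked i z : 1 <= i <= n - 3 -> (forall a, nat_of_ord (z a) <> i) ->
  is_hom n A z -> linked z (lower i z).
Proof.
move=> Hi Hzi Hz; apply: linked_step (linked_refl Hz) (lower_hom _ Hzi Hz) _.
  by lia.
exists i; split=> //; rewrite sigma_at_low //; case: sig_choice.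
- by right; split=> a /=; have := Hzi a; repeat case: ifP; lia.
- by left; split=> a //=; apply/eqP; apply: Hzi.
Qed.

(* Sliding a value down across a gap: if z misses every value in [p, q),
   then z is linked to the homomorphism sending the value q to p and agreeing
   with z elsewhere (obtained by lowering with g_(q-1), ..., g_p). *)
Lemma slide_down z p q : 1 <= p <= q -> q <= n - 2 -> is_hom n A z ->
  (forall a, ~ (p <= z a < q)) ->
  exists2 w, linked z w & forall a, w a = (if z a == q :> nat then p else z a) :> nat.
Proof.
move=> Hpq; have [d ->] : exists d, q = p + d by exists (q - p); lia.
elim: d z => [|d IH] z Hd Hz Hgap.
  by exists z => [|a]; [apply: linked_refl | rewrite addn0; case: eqP].
have Lz : linked z (lower (p + d) z).
  by apply: lower_linked Hz => [|a]; [lia | have := Hgap a; lia].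
have [w Lw Hw] := IH (lower (p + d) z) ltac:(lia) (proj2 (linked_hom Lz))
  ltac:(move=> a /=; have := Hgap a; case: ifP; lia).
exists w => [|a]; first exact: linked_trans Lz Lw.
by rewrite Hw /=; have := Hgap a; repeat case: ifP; lia.
Qed.

Definition packed (k : nat) (z : A -> 'I_n) : Prop :=
  exists m, [/\ m <= k, forall u, 1 <= u <= m -> exists a, z a = u :> nat
              & forall a, ~ (m < z a <= k)].

(* Every homomorphism is linked to a packed one: if the value k+1 occurs,
   slide it down onto the first gap m+1. *)
Lemma packed_linked z k : k <= n - 2 -> is_hom n A z ->
  exists2 w, linked z w & packed k w.
Proof.
move=> + Hz; elim: k => [_ | k IH Hk].
  by exists z; [apply: linked_refl | exists 0; split=> // [u|a]; lia].
have [w Lzw [m [Hmk Hfull Hgap]]] := IH (ltnW Hk).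
have [_ Hw] := linked_hom Lzw.
case: (classic (exists a, w a = k.+1 :> nat)) => [[a0 Ha0] | Hmiss]; last first.
  exists w => //; exists m; split=> [|//|a Ha]; first lia.
  by apply: (Hgap a); case: (w a =P k.+1 :> nat) => [E|]; [case: Hmiss; exists a | lia].
have [w' Lww' Hw'] := slide_down (p := m.+1) (q := k.+1) ltac:(lia) Hk Hw
  ltac:(move=> a; have := Hgap a; lia).
exists w'; first exact: linked_trans Lzw Lww'.
exists m.+1; split=> [|u Hu|a]; first lia.
- case: (u =P m.+1) => [-> | Hne]; first by exists a0; rewrite Hw' Ha0 eqxx.
  have [a Ha] := Hfull u ltac:(lia); exists a; rewrite Hw' Ha; case: eqP; lia.
- by rewrite Hw'; have := Hgap a; case: ifP; lia.
Qed.

Lemma hom_le_top z : is_hom n A z ->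
  forall a b, (z a <= z b) = (z (himp A a b) == n.-1 :> nat).
Proof.
move=> [_ [_ [Himp _]]] a b; rewrite Himp; have := ltn_ord (z a).
by case: (leqP (z a) (z b)) => [_ _ | Hba Ha]; [rewrite eqxx | apply/esym/eqP; lia].
Qed.

Lemma same_top_le z w : is_hom n A z -> is_hom n A w -> same_top z w ->
  forall a b, (z a <= z b) = (w a <= w b).
Proof. by move=> Hz Hw Hzw a b; rewrite (hom_le_top Hz) (hom_le_top Hw) Hzw. Qed.

(* A packed homomorphism takes every value below any value it takes, up to
   n-2 (the value 0 is taken at the bottom). *)
Lemma packed_downward z : is_hom n A z -> packed (n - 2) z ->
  forall a u, u <= z a <= n - 2 -> exists b, z b = u :> nat.
Proof.
move=> [_ [_ [_ [Hb _]]]] [m [_ Hfull Hgap]] a u Hu.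
case: (posnP u) => [-> | Hu0]; first by exists (hbot A).
by apply: Hfull; have := Hgap a; lia.
Qed.

(* Two packed homomorphisms with the same top-preimage agree on every a with
   z a <= v, by induction on v: the value v+1 of z is forced for w, since w
   must place a strictly above a point of value v and cannot skip v+1. *)
Lemma packed_agree z w : is_hom n A z -> is_hom n A w ->
  packed (n - 2) z -> packed (n - 2) w -> same_top z w ->
  forall v, v <= n - 2 -> forall a, z a <= v -> w a = z a :> nat.
Proof.
move=> Hz Hw Pz Pw Hzw; have Hle := same_top_le Hz Hw Hzw.
have [[_ [_ [_ [Hzb _]]]] [_ [_ [_ [Hwb _]]]]] := (Hz, Hw).
elim=> [_ a Ha | v IH Hv a Ha].
  by have := Hle a (hbot A); rewrite Hzb Hwb; lia.
case: (leqP (z a) v) => [|Hva]; first exact: IH (ltnW Hv) a.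
have [b Hb] := packed_downward Hz Pz (a := a) (u := v) ltac:(lia).
have Hwb' : w b = v :> nat by rewrite (IH (ltnW Hv)) ?Hb.
have Hwa : v < w a by have := Hle a b; rewrite Hb Hwb'; case: leqP; lia.
have Hwa' : w a <= n - 2.
  by have := Hzw a; have := ltn_ord (w a); case: eqP; case: eqP; lia.
(* w sends a above level v, and below the top, so w also takes value v+1 *)
have [c Hc] := packed_downward Hw Pw (a := a) (u := v.+1) ltac:(lia).
have Hzc : v < z c.
  by rewrite ltnNge; apply/negP => Hzc; have := IH (ltnW Hv) c Hzc; lia.
by have := Hle a c; rewrite Hc; case: leqP; case: leqP; lia.
Qed.

Lemma packed_unique z w : is_hom n A z -> is_hom n A w ->
  packed (n - 2) z -> packed (n - 2) w -> same_top z w -> z = w.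
Proof.
move=> Hz Hw Pz Pw Hzw; apply: functional_extensionality => a; apply: val_inj => /=.
case: (z a =P n.-1 :> nat) => [Ha | Ha].
  by have := Hzw a; rewrite Ha eqxx => /esym/eqP ->.
have Hza : z a <= n - 2 by have := ltn_ord (z a); lia.
by rewrite (packed_agree Hz Hw Pz Pw Hzw Hza).
Qed.

End Chains.

Theorem lemma2p3 (n : nat) (Hn : 4 <= n) (s : Sigma n) (A : HSig)
  (HA : in_Gn n A) (x y : A -> 'I_n) (Hx : is_hom n A x) (Hy : is_hom n A y)
  (Hxy : x <> y) :
  let P1 := forall a, (nat_of_ord (x a) == n.-1) = (nat_of_ord (y a) == n.-1) in
  let P2 := forall a, omega n (x a) = omega n (y a) in
  let P3 := exists (N : nat) (z : nat -> A -> 'I_n),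
      z 0 = x /\ z N = y /\ (forall j, j <= N -> is_hom n A (z j)) /\
      (forall j, j < N -> exists i, (1 <= i) && (i <= n - 3) /\
         (comp_eq n A (sigma_at n s i) (z j) (z j.+1) \/
          comp_eq n A (sigma_at n s i) (z j.+1) (z j))) in
  (P1 <-> P2) /\ (P2 <-> P3).
Proof.
move=> P1 P2 P3.
have P12 : P1 <-> P2 by split=> H a; apply/omega_eq.
split=> //; split => [/P12 Htop | Hchain]; last first.
  by apply/P12/(linked_top (chain_linked Hx Hchain)).
(* x and y are linked to packed forms, which coincide *)
have [cx Lx Px] := packed_linked s (leqnn (n - 2)) Hx.
have [cy Ly Py] := packed_linked s (leqnn (n - 2)) Hy.
have Ecxy : cx = cy.
  apply: packed_unique (linked_hom Lx).2 (linked_hom Ly).2 Px Py _ => a.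
  by rewrite -(linked_top Lx) -(linked_top Ly); apply: Htop.
rewrite -{}Ecxy in Ly.
exact: linked_chain (linked_trans Lx (linked_sym Ly)).
Qed.
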